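(* Let $(X_1,X_2,Y)$ be jointly distributed finite-valued random variables, and let $I_\cap,UI_1,UI_2,SI$ be nonnegative real numbers satisfying $I(X_1X_2;Y)=I_\cap+SI+UI_1+UI_2$, $I(X_1;Y)=I_\cap+UI_1$, $I(X_2;Y)=I_\cap+UI_2$. Then: (a) if $X_1-X_2-Y$, then $I_\cap=I(X_1;Y)$; (b) if $X_2-X_1-Y$, then $I_\cap=I(X_2;Y)$; (c) if both $X_1-X_2-Y$ and $X_2-X_1-Y$, then $I_\cap=I(X_1;Y)=I(X_2;Y)=I(X_1X_2;Y)$; (d) if $X_1-Y-X_2$, then $I_\cap\geq I(X_1;X_2)$.
   Context: For finite-valued random variables, $A-B-C$ means that $A$ and $C$ are conditionally independent given $B$. $X_1X_2$ denotes the joint variable $(X_1,X_2)$. The numbers $I_\cap$, $UI_1$, $UI_2$, $SI$ represent, respectively, the redundant, unique (of $X_1$), unique (of $X_2$) and synergistic information in a partial information decomposition of $I(X_1X_2;Y)$. *)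

From mathcomp Require Import all_boot all_order all_algebra.
From mathcomp Require Import reals exp.
Set Implicit Arguments. Unset Strict Implicit. Unset Printing Implicit Defensive.
Import Order.TTheory GRing.Theory Num.Theory.
Local Open Scope ring_scope.

Section FiniteProb.
Variable R : realType.
Variable Omega : finType.

Definition is_dist (P : Omega -> R) : Prop :=
  (forall w, 0 <= P w) /\ \sum_(w : Omega) P w = 1.

Definition pr (P : Omega -> R) (A : finType) (X : Omega -> A) (a : A) : R :=
  \sum_(w : Omega | X w == a) P w.

Definition pairRV (A B : finType) (X : Omega -> A) (Y : Omega -> B) :
  Omega -> A * B := fun w => (X w, Y w).

(* Mutual information I(X;Y) (natural log; convention 0 log 0 = 0). *)
Definition MI (P : Omega -> R) (A B : finType) (X : Omega -> A) (Y : Omega -> B) : R :=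
  \sum_(a : A) \sum_(b : B)
    let pab := pr P (pairRV X Y) (a, b) in
    if pab == 0 then 0 else pab * ln (pab / (pr P X a * pr P Y b)).

(* Markov chain A - B - C : A and C conditionally independent given B,
   i.e. p(a,b,c) p(b) = p(a,b) p(b,c) for all a b c. *)
Definition markov (P : Omega -> R) (A B C : finType)
  (X : Omega -> A) (Y : Omega -> B) (Z : Omega -> C) : Prop :=
  forall a b c,
    pr P (pairRV (pairRV X Y) Z) ((a, b), c) * pr P Y b =
    pr P (pairRV X Y) (a, b) * pr P (pairRV Y Z) (b, c).

End FiniteProb.

From mathcomp Require Import all_boot all_order all_algebra.
From mathcomp Require Import reals exp.
From mathcomp Require Import lra.
Import Order.TTheory GRing.Theory Num.Theory.
Local Open Scope ring_scope.
Set Implicit Arguments. Unset Strict Implicit.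

(* Mutual information is the expectation of log p(x,y) - log p(x) - log p(y).
   The Markov chain X - Y - Z is, on the support of P, the pointwise identity
   log p(x,y,z) + log p(y) = log p(x,y) + log p(y,z), so taking expectations
   gives I(XY;Z) = I(Y;Z) and I(X;Z) = I(X;Y) + I(Z;Y) - I(XZ;Y).
   Under X1 - X2 - Y the first identity turns the decomposition into
   SI + UI1 = 0, so UI1 = 0 by nonnegativity; under X1 - Y - X2 the second
   gives I(X1;X2) = Icap - SI <= Icap. *)

Section MutualInformation.
Variable R : realType.
Variable Omega : finType.
Variable P : Omega -> R.
Hypothesis P_ge0 : forall w, 0 <= P w.

Definition expect (f : Omega -> R) : R := \sum_(w : Omega) P w * f w.

Definition logpr (C : finType) (Z : Omega -> C) (w : Omega) : R :=
  ln (pr P Z (Z w)).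

Lemma expectD f g : expect f + expect g = expect (fun w => f w + g w).
Proof. by rewrite /expect -big_split; apply: eq_bigr => w _; rewrite mulrDr. Qed.

Lemma expectB f g : expect f - expect g = expect (fun w => f w - g w).
Proof.
by rewrite /expect -sumrN -big_split; apply: eq_bigr => w _; rewrite mulrBr.
Qed.

Lemma eq_expect_supp f g :
  (forall w, 0 < P w -> f w = g w) -> expect f = expect g.
Proof.
move=> fg; apply: eq_bigr => w _.
have [->|Pw] := eqVneq (P w) 0; first by rewrite !mul0r.
by rewrite fg // lt_def Pw P_ge0.
Qed.

Lemma sum_pr_expect (C : finType) (Z : Omega -> C) (f : C -> R) :
  \sum_(c : C) pr P Z c * f c = expect (fun w => f (Z w)).
Proof.
rewrite /expect /pr.
under eq_bigr => c _ do rewrite big_distrl /= big_mkcond /=.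
rewrite exchange_big /=; apply: eq_bigr => w _.
rewrite (bigD1 (Z w)) //= eqxx big1 ?addr0 // => c /negbTE.
by rewrite eq_sym => ->.
Qed.

Lemma pr_ge0 (C : finType) (Z : Omega -> C) c : 0 <= pr P Z c.
Proof. exact: sumr_ge0. Qed.

Lemma pr_le (C C' : finType) (Z : Omega -> C) (Z' : Omega -> C') c c' :
  (forall w, Z w == c -> Z' w == c') -> pr P Z c <= pr P Z' c'.
Proof.
move=> sub; rewrite /pr (big_mkcond (fun w => Z w == c)).
rewrite (big_mkcond (fun w => Z' w == c')); apply: ler_sum => w _.
by case: ifP => [/sub ->|_] //; case: ifP.
Qed.

Lemma pr_pair_le_l (A B : finType) (X : Omega -> A) (Y : Omega -> B) a b :
  pr P (pairRV X Y) (a, b) <= pr P X a.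
Proof. by apply: pr_le => w; rewrite /pairRV xpair_eqE => /andP[]. Qed.

Lemma pr_pair_le_r (A B : finType) (X : Omega -> A) (Y : Omega -> B) a b :
  pr P (pairRV X Y) (a, b) <= pr P Y b.
Proof. by apply: pr_le => w; rewrite /pairRV xpair_eqE => /andP[]. Qed.

Lemma pr_gt0_supp (C : finType) (Z : Omega -> C) w :
  0 < P w -> 0 < pr P Z (Z w).
Proof.
move=> Pw; apply: (lt_le_trans Pw).
by rewrite /pr (bigD1 w) //= lerDl; apply: sumr_ge0.
Qed.

Lemma MI_expect (A B : finType) (X : Omega -> A) (Y : Omega -> B) :
  MI P X Y = expect (fun w => logpr (pairRV X Y) w - logpr X w - logpr Y w).
Proof.
rewrite /MI pair_bigA /=.
rewrite [LHS](eq_bigr (fun p : A * B => pr P (pairRV X Y) p *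
   (ln (pr P (pairRV X Y) p) - ln (pr P X p.1) - ln (pr P Y p.2)))).
  exact: sum_pr_expect.
move=> [a b] _ /=.
have [->|pab_neq0] := eqVneq (pr P (pairRV X Y) (a, b)) 0; first by rewrite mul0r.
have pab_gt0 : 0 < pr P (pairRV X Y) (a, b) by rewrite lt_def pab_neq0 pr_ge0.
have pa_gt0 := lt_le_trans pab_gt0 (pr_pair_le_l X Y a b).
have pb_gt0 := lt_le_trans pab_gt0 (pr_pair_le_r X Y a b).
by rewrite ln_div ?posrE ?mulr_gt0 // lnM ?posrE // opprD addrA.
Qed.

Lemma logpr_eq (C C' : finType) (Z : Omega -> C) (Z' : Omega -> C') w :
  (forall w', (Z w' == Z w) = (Z' w' == Z' w)) -> logpr Z w = logpr Z' w.
Proof. by move=> eqZ; rewrite /logpr /pr; congr ln; apply: eq_bigl => w'; rewrite eqZ. Qed.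

Lemma logpr_pairC (A B : finType) (X : Omega -> A) (Y : Omega -> B) w :
  logpr (pairRV X Y) w = logpr (pairRV Y X) w.
Proof. by apply: logpr_eq => w'; rewrite /pairRV !xpair_eqE andbC. Qed.

Lemma logpr_pair_pairC (A B C : finType)
    (X : Omega -> A) (Y : Omega -> B) (Z : Omega -> C) w :
  logpr (pairRV (pairRV X Y) Z) w = logpr (pairRV (pairRV Y X) Z) w.
Proof. by apply: logpr_eq => w'; rewrite /pairRV !xpair_eqE (andbC (X w' == _)). Qed.

Lemma logpr_pair_pairAC (A B C : finType)
    (X : Omega -> A) (Y : Omega -> B) (Z : Omega -> C) w :
  logpr (pairRV (pairRV X Y) Z) w = logpr (pairRV (pairRV X Z) Y) w.
Proof.
by apply: logpr_eq => w'; rewrite /pairRV !xpair_eqE -!andbA (andbC (Y w' == _)).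
Qed.

Lemma MI_pairC (A B C : finType) (X : Omega -> A) (Y : Omega -> B) (Z : Omega -> C) :
  MI P (pairRV X Y) Z = MI P (pairRV Y X) Z.
Proof.
by rewrite !MI_expect; apply: eq_bigr => w _; rewrite logpr_pair_pairC (logpr_pairC X).
Qed.

Lemma markov_logpr (A B C : finType)
    (X : Omega -> A) (Y : Omega -> B) (Z : Omega -> C) w :
  markov P X Y Z -> 0 < P w ->
  logpr (pairRV (pairRV X Y) Z) w + logpr Y w =
  logpr (pairRV X Y) w + logpr (pairRV Y Z) w.
Proof.
move=> XYZ Pw; rewrite /logpr -!lnM ?posrE ?pr_gt0_supp //.
by congr ln; apply: XYZ.
Qed.

Lemma markov_MI_pair (A B C : finType)
    (X : Omega -> A) (Y : Omega -> B) (Z : Omega -> C) :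
  markov P X Y Z -> MI P (pairRV X Y) Z = MI P Y Z.
Proof.
move=> XYZ; rewrite !MI_expect; apply: eq_expect_supp => w Pw.
have := markov_logpr XYZ Pw; lra.
Qed.

Lemma markov_MI_ends (A B C : finType)
    (X : Omega -> A) (Y : Omega -> B) (Z : Omega -> C) :
  markov P X Y Z -> MI P X Z = MI P X Y + MI P Z Y - MI P (pairRV X Z) Y.
Proof.
move=> XYZ; rewrite !MI_expect expectD expectB; apply: eq_expect_supp => w Pw.
have := markov_logpr XYZ Pw.
rewrite logpr_pair_pairAC [logpr (pairRV Y Z) w]logpr_pairC; lra.
Qed.

End MutualInformation.

Theorem lemma4 (R : realType) (Omega : finType) (P : Omega -> R)
  (A1 A2 B : finType) (X1 : Omega -> A1) (X2 : Omega -> A2) (Y : Omega -> B)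
  (Icap UI1 UI2 SI : R) :
  is_dist P ->
  0 <= Icap -> 0 <= UI1 -> 0 <= UI2 -> 0 <= SI ->
  MI P (pairRV X1 X2) Y = Icap + SI + UI1 + UI2 ->
  MI P X1 Y = Icap + UI1 ->
  MI P X2 Y = Icap + UI2 ->
  [/\ (markov P X1 X2 Y -> Icap = MI P X1 Y),
      (markov P X2 X1 Y -> Icap = MI P X2 Y),
      (markov P X1 X2 Y -> markov P X2 X1 Y ->
         Icap = MI P X1 Y /\ MI P X1 Y = MI P X2 Y /\
         MI P X2 Y = MI P (pairRV X1 X2) Y)
    & (markov P X1 Y X2 -> MI P X1 X2 <= Icap)].
Proof.
move=> [P_ge0 _] Icap_ge0 UI1_ge0 UI2_ge0 SI_ge0 I12 I1 I2.
have chain12 (M : markov P X1 X2 Y) := markov_MI_pair P_ge0 M.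
have chain21 (M : markov P X2 X1 Y) : MI P (pairRV X1 X2) Y = MI P X1 Y.
  by rewrite (MI_pairC P_ge0); exact: (markov_MI_pair P_ge0 M).
split.
- by move=> /chain12; lra.
- by move=> /chain21; lra.
- by move=> /chain12 + /chain21; lra.
- by move=> /(markov_MI_ends P_ge0); lra.
Qed.
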